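(* Suppose the designer's preferences satisfy $A_1=A_0=\bar A\ge 0$ and $B_1=B_0=\bar B\ge 0$. Then the designer's optimal classifier (maximizer of $EU_D(\delta\mid r)$ over $\delta\in[0,1]^2$) is $\delta^*=(1,1)$ if $r(\bar A-\bar B)>0$ and $\delta^*=(0,0)$ if $r(\bar A-\bar B)<0$; and if $r=0$ or $\bar A=\bar B$, all classifiers give the designer the same expected payoff.
   Context: A unit mass of individuals $i\in[0,1]$ each privately knows a cost $\gamma_i\in\mathbb{R}$ of choosing behavior $\beta_i=1$ (compliance) rather than $\beta_i=0$. Costs are distributed according to a continuously differentiable CDF $F$ whose density $f$ is log-concave with full support on $\mathbb{R}$. A classifier is $\delta=(\delta_1,\delta_0)\in[0,1]^2$. Each individual's behavior generates a signal $s_i\in\{0,1\}$ with $\Pr[s_i=\beta_i]=\phi$, $\phi\in(\tfrac12,1]$ fixed, and the classifier assigns $d_i\in\{0,1\}$ with $\Pr[d_i=s_i\mid s_i]=\delta_{s_i}$. An individual with $d_i=1$ receives reward $r\in\mathbb{R}$. Let $\rho(\delta,\phi)=(\delta_1+\delta_0-1)(2\phi-1)$; individual $i$ chooses $\beta_i=1$ iff $\gamma_i\le r\rho(\delta,\phi)$, giving prevalence $\pi=F(r\rho(\delta,\phi))$. The designer's payoffs are $A_1$ (complier, $d_i=1$), $A_0$ (complier, $d_i=0$), $B_1$ (non-complier, $d_i=0$), $B_0$ (non-complier, $d_i=1$), with expected payoff $EU_D(\delta\mid r)=\pi\big[\phi(A_1\delta_1+A_0(1-\delta_1))+(1-\phi)(A_0\delta_0+A_1(1-\delta_0))\big]+(1-\pi)\big[\phi(B_1\delta_0+B_0(1-\delta_0))+(1-\phi)(B_0\delta_1+B_1(1-\delta_1))\big]$.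 *)

From Stdlib Require Import Reals.
From Coquelicot Require Import Coquelicot.
Open Scope R_scope.

(* F is a cumulative distribution function on R (F is assumed differentiable
   below, hence continuous, so right-continuity is automatic but stated anyway). *)
Definition is_CDF (F : R -> R) : Prop :=
  (forall x y, x <= y -> F x <= F y) /\
  (forall x, is_lim F x (F x)) /\
  is_lim F m_infty 0 /\
  is_lim F p_infty 1.

Definition has_C1_density (F f : R -> R) : Prop :=
  (forall x, is_derive F x (f x)) /\ (forall x, continuous f x).

Definition log_concave (f : R -> R) : Prop :=
  (forall x, 0 <= f x) /\
  (forall x y t, 0 <= t <= 1 -> 0 < f x -> 0 < f y ->
     0 < f (t * x + (1 - t) * y) /\
     t * ln (f x) + (1 - t) * ln (f y) <= ln (f (t * x + (1 - t) * y))).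

(* f has full support on R: the closure of {x | f x <> 0} is all of R,
   i.e. every nonempty open interval contains a point where f is nonzero. *)
Definition full_support (f : R -> R) : Prop :=
  forall a b, a < b -> exists x, a < x < b /\ f x <> 0.

Definition rho (d1 d0 phi : R) : R := (d1 + d0 - 1) * (2 * phi - 1).

Definition prevalence (F : R -> R) (r phi d1 d0 : R) : R := F (r * rho d1 d0 phi).

Definition EU_D (F : R -> R) (phi r A1 A0 B1 B0 d1 d0 : R) : R :=
  let p := prevalence F r phi d1 d0 in
  p * (phi * (A1 * d1 + A0 * (1 - d1)) + (1 - phi) * (A0 * d0 + A1 * (1 - d0)))
  + (1 - p) * (phi * (B1 * d0 + B0 * (1 - d0)) + (1 - phi) * (B0 * d1 + B1 * (1 - d1))).

Definition classifier (d1 d0 : R) : Prop := 0 <= d1 <= 1 /\ 0 <= d0 <= 1.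

Definition unique_optimal (U : R -> R -> R) (e1 e0 : R) : Prop :=
  classifier e1 e0 /\
  (forall d1 d0, classifier d1 d0 -> U d1 d0 <= U e1 e0) /\
  (forall d1 d0, classifier d1 d0 -> U d1 d0 = U e1 e0 -> d1 = e1 /\ d0 = e0).

(* With identical payoffs the designer only cares whether individuals comply,
   so EU_D = Bbar + (Abar - Bbar) F(r rho(delta, phi)).  Since phi > 1/2, rho
   is strictly increasing in delta1 + delta0, and F is strictly increasing
   because its density vanishes on no interval.  Hence the payoff is a
   strictly monotone function of delta1 + delta0 whose direction is the sign
   of r (Abar - Bbar), and it is constant when r = 0 or Abar = Bbar. *)
From Stdlib Require Import Reals Lra.
From Coquelicot Require Import Coquelicot.
Open Scope R_scope.

Lemma is_derive_const_on_interval (F : R -> R) (a b z l : R) :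
  (forall t, a <= t <= b -> F t = F a) -> a < z < b -> is_derive F z l -> l = 0.
Proof.
  intros Hconst Hz Hd.
  assert (Hloc : locally z (fun t => F a = F t)).
  { apply (locally_interval _ z a b); simpl; try lra.
    intros t Hat Htb; symmetry; apply Hconst; lra. }
  assert (Hd0 : is_derive F z 0).
  { apply (is_derive_ext_loc (fun _ => F a)); [exact Hloc|].
    apply (is_derive_const (K := R_AbsRing) (F a) z). }
  rewrite <- (is_derive_unique _ _ _ Hd); exact (is_derive_unique _ _ _ Hd0).
Qed.

Lemma strict_increasing_of_full_support_derive (F f : R -> R) :
  (forall x y, x <= y -> F x <= F y) -> (forall x, is_derive F x (f x)) ->
  full_support f -> forall x y, x < y -> F x < F y.
Proof.
  intros Hmono Hd Hsupp x y Hxy.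
  destruct (Rle_lt_or_eq_dec _ _ (Hmono x y (Rlt_le _ _ Hxy))) as [Hlt|Heq];
    [exact Hlt|exfalso].
  destruct (Hsupp x y Hxy) as [z [Hz Hfz]].
  apply Hfz, (is_derive_const_on_interval F x y z); [|exact Hz|apply Hd].
  intros t Ht; apply Rle_antisym; [rewrite Heq|]; apply Hmono; lra.
Qed.

Lemma EU_D_identical_payoffs (F : R -> R) (phi r A B d1 d0 : R) :
  EU_D F phi r A A B B d1 d0 = B + (A - B) * F (r * rho d1 d0 phi).
Proof. unfold EU_D, prevalence; ring. Qed.

Lemma scaled_comp_lt (F : R -> R) (c r x y : R) :
  (forall x y, x < y -> F x < F y) -> 0 < c * r -> x < y ->
  c * F (r * x) < c * F (r * y).
Proof.
  intros HF Hcr Hxy.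
  destruct (Rlt_or_le 0 r) as [Hr|Hr].
  - assert (F (r * x) < F (r * y)) by (apply HF; nra); nra.
  - assert (Hr' : r < 0) by (destruct Hr as [Hneg|Hzero]; [exact Hneg|subst r; lra]).
    assert (F (r * y) < F (r * x)) by (apply HF; nra); nra.
Qed.

Lemma unique_optimal_of_sum_increasing (U : R -> R -> R) (g : R -> R) :
  (forall d1 d0, U d1 d0 = g (d1 + d0)) -> (forall s t, s < t -> g s < g t) ->
  unique_optimal U 1 1.
Proof.
  intros HU Hg; unfold unique_optimal, classifier; rewrite HU.
  split; [lra|split]; intros d1 d0 Hd; rewrite HU;
    destruct (Rle_lt_or_eq_dec (d1 + d0) (1 + 1)) as [Hlt|Heq]; try lra.
  - apply Rlt_le, Hg, Hlt.
  - rewrite Heq; lra.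
  - intros HUeq; pose proof (Hg _ _ Hlt); lra.
Qed.

Lemma unique_optimal_of_sum_decreasing (U : R -> R -> R) (g : R -> R) :
  (forall d1 d0, U d1 d0 = g (d1 + d0)) -> (forall s t, s < t -> g t < g s) ->
  unique_optimal U 0 0.
Proof.
  intros HU Hg; unfold unique_optimal, classifier; rewrite HU.
  split; [lra|split]; intros d1 d0 Hd; rewrite HU;
    destruct (Rle_lt_or_eq_dec (0 + 0) (d1 + d0)) as [Hlt|Heq]; try lra.
  - apply Rlt_le, Hg, Hlt.
  - rewrite <- Heq; lra.
  - intros HUeq; pose proof (Hg _ _ Hlt); lra.
Qed.

Theorem proposition2 (F f : R -> R) (phi r Abar Bbar : R)
  (HF : is_CDF F) (Hf : has_C1_density F f) (Hlc : log_concave f)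
  (Hsupp : full_support f) (Hphi : 1 / 2 < phi <= 1)
  (HA : 0 <= Abar) (HB : 0 <= Bbar) :
  let U := EU_D F phi r Abar Abar Bbar Bbar in
  (r * (Abar - Bbar) > 0 -> unique_optimal U 1 1) /\
  (r * (Abar - Bbar) < 0 -> unique_optimal U 0 0) /\
  ((r = 0 \/ Abar = Bbar) ->
     forall d1 d0 e1 e0, classifier d1 d0 -> classifier e1 e0 ->
       U d1 d0 = U e1 e0).
Proof.
  intros U.
  destruct HF as [Hmono _], Hf as [Hd _].
  pose proof (strict_increasing_of_full_support_derive F f Hmono Hd Hsupp) as HFlt.
  set (g s := Bbar + (Abar - Bbar) * F (r * ((s - 1) * (2 * phi - 1)))).
  assert (HU : forall d1 d0, U d1 d0 = g (d1 + d0)).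
  { intros d1 d0; unfold U; rewrite EU_D_identical_payoffs; reflexivity. }
  assert (Hrho : forall s t, s < t -> (s - 1) * (2 * phi - 1) < (t - 1) * (2 * phi - 1))
    by (intros; nra).
  split; [|split].
  - intros Hpos; apply (unique_optimal_of_sum_increasing U g HU).
    intros s t Hst; unfold g.
    pose proof (scaled_comp_lt F (Abar - Bbar) r _ _ HFlt ltac:(nra) (Hrho s t Hst)).
    lra.
  - intros Hneg; apply (unique_optimal_of_sum_decreasing U g HU).
    intros s t Hst; unfold g.
    pose proof (scaled_comp_lt F (Bbar - Abar) r _ _ HFlt ltac:(nra) (Hrho s t Hst)).
    nra.
  - intros [Hr|Hab] d1 d0 e1 e0 _ _; rewrite !HU; unfold g.
    + subst r; rewrite !Rmult_0_l; reflexivity.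
    + rewrite Hab; ring.
Qed.
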